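(* Let $X$ be a connected CW complex with fundamental group $G$ and universal cover $\widetilde X$ (with the induced cell structure), and let $\alpha\in C^k(\widetilde X;\mathbb{R})$ be a cellular cocycle. Suppose there is $\Lambda\ge0$ such that $|\alpha(c)|\le\Lambda\,\|\partial c\|_1$ for every cellular chain $c\in C_k(\widetilde X;\mathbb{R})$. Then $\alpha$ is bounded on orbits and $[\alpha]=0\in H^k_{(\infty)}(X;\mathbb{R})$. Moreover, if the $(k-1)$-skeleton of $X$ is finite, the converse holds: if $\alpha$ is a cellular cocycle bounded on orbits with $[\alpha]=0$ in $H^k_{(\infty)}(X;\mathbb{R})$, then such a $\Lambda$ exists.
   Context: $\|\cdot\|_1$ on cellular chains of $\widetilde X$ is the $\ell^1$-norm with respect to the basis of cells. $G$ acts on cells of $\widetilde X$ by covering transformations. A cellular real cochain on $\widetilde X$ is bounded on orbits if for every cell $e$ the set $\{\alpha(g\cdot e):g\in G\}$ is bounded. $H^\bullet_{(\infty)}(X;\mathbb{R})$ is (canonically isomorphic to) the cohomology of the complex of real cellular cochains on $\widetilde X$ bounded on orbits; equivalently $H^\bullet(X;\ell^\infty(G,\mathbb{R}))$ with $\ell^\infty(G,\mathbb{R})$ the bounded real functions on $G$ with action $(g f)(h)=f(g^{-1}h)$. *)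

From HB Require Import structures.
From mathcomp Require Import all_boot all_order all_algebra.
From mathcomp Require Import monoid.
From mathcomp Require Import reals.
Set Implicit Arguments. Unset Strict Implicit. Unset Printing Implicit Defensive.
Import Order.TTheory GRing.Theory Num.Theory.
Local Open Scope ring_scope.

(* The cellular chain complex of the universal cover tilde X of a CW complex X,
   together with the action of G = pi_1(X) by covering transformations, which
   permutes cells freely. The boundary of a
   0-chain is 0 (unaugmented cellular chain complex). *)
Record GCellComplex (G : groupType) := {
  cell : nat -> eqType;
  act : forall n, G -> cell n -> cell n;
  act1 : forall n (e : cell n), act 1%g e = e;
  actM : forall n (g h : G) (e : cell n), act (g * h)%g e = act g (act h e);
  act_free : forall n (g : G) (e : cell n), act g e = e -> g = 1%g;
  bd : forall n, cell n.+1 -> seq (int * cell n);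
  bd_equiv : forall n (g : G) (e : cell n.+1) (f : cell n),
     \sum_(q <- bd (act g e) | q.2 == act g f) q.1
     = \sum_(q <- bd e | q.2 == f) q.1;
  bd_bd : forall n (e : cell n.+2) (f : cell n),
     \sum_(p <- bd e) p.1 * \sum_(q <- bd p.2 | q.2 == f) q.1 = 0
}.

Section Chains.
Variables (G : groupType) (X : GCellComplex G) (R : realType).

Definition chain n := seq (R * cell X n).

Definition coeff n (c : chain n) (x : cell X n) : R :=
  \sum_(p <- c | p.2 == x) p.1.

Definition norm1 n (c : chain n) : R :=
  \sum_(x <- undup (map snd c)) `|coeff c x|.

Definition eval n (a : cell X n -> R) (c : chain n) : R :=
  \sum_(p <- c) p.1 * a p.2.

Definition chain_bd n (c : chain n.+1) : chain n :=
  flatten [seq [seq (p.1 * q.1%:~R, q.2) | q <- bd p.2] | p <- c].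

Definition bd_norm k : chain k -> R :=
  match k return chain k -> R with
  | 0 => fun _ => 0
  | n.+1 => fun c => norm1 (chain_bd c)
  end.

Definition cobd n (b : cell X n -> R) (e : cell X n.+1) : R :=
  \sum_(q <- bd e) q.1%:~R * b q.2.

Definition cocycle k (a : cell X k -> R) : Prop :=
  forall e : cell X k.+1, cobd a e = 0.

Definition bounded_on_orbits n (a : cell X n -> R) : Prop :=
  forall e : cell X n, exists M : R, forall g : G, `|a (act g e)| <= M.

(* [a] = 0 in H^k_(oo)(X;R): a is the coboundary of a cochain bounded
   on orbits (for k = 0 there are no (k-1)-cochains, so a = 0). *)
Definition linf_cohom_zero k : (cell X k -> R) -> Prop :=
  match k return (cell X k -> R) -> Prop with
  | 0 => fun a => forall e, a e = 0
  | n.+1 => fun a => exists b : cell X n -> R,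
              bounded_on_orbits b /\ forall e, a e = cobd b e
  end.

(* the (k-1)-skeleton of X = tilde X / G is finite: in every dimension
   n <= k-1 there are finitely many G-orbits of cells *)
Definition finite_skeleton_below k : Prop :=
  forall n, (n < k)%N -> exists s : seq (cell X n),
    forall e : cell X n, exists g : G, exists2 e0, e0 \in s & e = act g e0.

Definition ell1_bd_bounded k (a : cell X k -> R) : Prop :=
  exists Lambda : R, 0 <= Lambda /\
    forall c : chain k, `|eval a c| <= Lambda * bd_norm c.

End Chains.

From HB Require Import structures.
From mathcomp Require Import all_boot all_order all_algebra.
From mathcomp Require Import monoid reals boolp classical_sets.
From mathcomp Require Import ring lra.
Set Implicit Arguments. Unset Strict Implicit. Unset Printing Implicit Defensive.
Import Order.TTheory GRing.Theory Num.Theory.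
Local Open Scope ring_scope.

(* The theorem is an instance of the duality between l^1 chains and
   l^oo cochains.  For a (k+1)-cocycle a with |a(c)| <= Lam ||dc||_1, the
   functional dc |-> a(c) on boundaries is well defined and has norm <= Lam
   for the l^1 norm; by a Hahn-Banach argument it extends to a functional on
   all k-chains of norm <= Lam, i.e. to a k-cochain b with |b| <= Lam and
   a = db.  Such a b is bounded on orbits, and so is a = db because the
   action of G preserves ||de||_1.  Conversely, if a = db with b bounded on
   orbits and there are finitely many orbits of k-cells, b is bounded by
   some M and |a(c)| = |b(dc)| <= M ||dc||_1. *)

Section ChainAlgebra.
Variables (G : groupType) (X : GCellComplex G) (R : realType) (n : nat).
Implicit Types (c d : chain X R n) (b : cell X n -> R).

Definition support c : seq (cell X n) := map snd c.

Definition supported_in (S : cell X n -> Prop) c : Prop :=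
  forall y, y \in support c -> S y.

Definition scale (r : R) c : chain X R n := [seq (r * p.1, p.2) | p <- c].

Lemma sum_indicator_uniq (T : eqType) (L : seq T) (x : T) (F : T -> R) :
  uniq L -> \sum_(y <- L) (if x == y then F y else 0) = if x \in L then F x else 0.
Proof.
elim: L => [|y L IH] /=; first by rewrite big_nil.
move=> /andP[yL uL]; rewrite big_cons IH // in_cons.
by case: (eqVneq x y) => [->|_] /=; rewrite ?(negbTE yL) ?addr0 ?add0r.
Qed.

Lemma sum_by_cell c (F : R * cell X n -> R) (L : seq (cell X n)) :
  uniq L -> {subset support c <= L} ->
  \sum_(p <- c) F p = \sum_(x <- L) \sum_(p <- c | p.2 == x) F p.
Proof.
move=> uL; elim: c => [|p c IH] sub.
  by rewrite big_nil big1 // => x _; rewrite big_nil.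
rewrite big_cons IH; last by move=> y yc; apply: sub; rewrite inE yc orbT.
have pL : p.2 \in L by apply: sub; rewrite inE eqxx.
rewrite [RHS](eq_bigr (fun x => (if p.2 == x then F p else 0)
                                + \sum_(q <- c | q.2 == x) F q)); last first.
  by move=> x _; rewrite big_cons; case: ifP; rewrite ?add0r.
by rewrite big_split /= sum_indicator_uniq // pL.
Qed.

Lemma coeff_notin c x : x \notin support c -> coeff c x = 0.
Proof.
rewrite /coeff; elim: c => [|p c IH] /=; first by rewrite big_nil.
rewrite in_cons negb_or => /andP[nx nc]; rewrite big_cons IH //.
by rewrite eq_sym (negbTE nx).
Qed.

Lemma norm1_over c (L : seq (cell X n)) :
  uniq L -> {subset support c <= L} -> norm1 c = \sum_(x <- L) `|coeff c x|.
Proof.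
move=> uL sub; rewrite (bigID (fun x => x \in support c)) /=.
rewrite [X in _ + X]big1 ?addr0; last by move=> x /coeff_notin ->; rewrite normr0.
rewrite -big_filter /norm1; apply: perm_big; apply: uniq_perm.
- exact: undup_uniq.
- exact: filter_uniq.
- by move=> x; rewrite mem_undup mem_filter; case xc: (x \in support c) => //=; rewrite sub.
Qed.

Lemma eval_over b c (L : seq (cell X n)) :
  uniq L -> {subset support c <= L} -> eval b c = \sum_(x <- L) coeff c x * b x.
Proof.
move=> uL sub; rewrite /eval (sum_by_cell _ uL sub).
by apply: eq_bigr => x _; rewrite /coeff mulr_suml; apply: eq_bigr => p /eqP ->.
Qed.

Lemma norm1_eq_coeff c d : (forall x, coeff c x = coeff d x) -> norm1 c = norm1 d.
Proof.
move=> E; set L := undup (support c ++ support d).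
have uL : uniq L by exact: undup_uniq.
rewrite (@norm1_over c L) ?(@norm1_over d L) //.
- by apply: eq_bigr => x _; rewrite E.
- by move=> x xd; rewrite mem_undup mem_cat xd orbT.
- by move=> x xc; rewrite mem_undup mem_cat xc.
Qed.

Lemma eval_eq_coeff b c d : (forall x, coeff c x = coeff d x) -> eval b c = eval b d.
Proof.
move=> E; set L := undup (support c ++ support d).
have uL : uniq L by exact: undup_uniq.
rewrite (@eval_over b c L) ?(@eval_over b d L) //.
- by apply: eq_bigr => x _; rewrite E.
- by move=> x xd; rewrite mem_undup mem_cat xd orbT.
- by move=> x xc; rewrite mem_undup mem_cat xc.
Qed.

Lemma coeff_nil x : coeff ([::] : chain X R n) x = 0.
Proof. by rewrite /coeff big_nil. Qed.

Lemma coeff_single (r : R) (y x : cell X n) :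
  coeff [:: (r, y)] x = if y == x then r else 0.
Proof. by rewrite /coeff big_cons big_nil /=; case: ifP; rewrite ?addr0. Qed.

Lemma coeff_cat c d x : coeff (c ++ d) x = coeff c x + coeff d x.
Proof. by rewrite /coeff big_cat. Qed.

Lemma coeff_scale r c x : coeff (scale r c) x = r * coeff c x.
Proof. by rewrite /coeff /scale big_map mulr_sumr. Qed.

Lemma support_scale r c : support (scale r c) = support c.
Proof. by rewrite /support /scale -map_comp. Qed.

Lemma norm1_nil : norm1 ([::] : chain X R n) = 0.
Proof. by rewrite /norm1 /= big_nil. Qed.

Lemma norm1_cat c d : norm1 (c ++ d) <= norm1 c + norm1 d.
Proof.
set L := undup (support c ++ support d).
have uL : uniq L by exact: undup_uniq.
have sc : {subset support c <= L} by move=> x xc; rewrite mem_undup mem_cat xc.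
have sd : {subset support d <= L} by move=> x xd; rewrite mem_undup mem_cat xd orbT.
have scd : {subset support (c ++ d) <= L} by move=> x; rewrite /support map_cat mem_undup.
rewrite (norm1_over uL sc) (norm1_over uL sd) (norm1_over uL scd) -big_split /=.
by apply: ler_sum => x _; rewrite coeff_cat; exact: ler_normD.
Qed.

Lemma norm1_scale r c : norm1 (scale r c) = `|r| * norm1 c.
Proof.
rewrite (@norm1_over _ (undup (support c)) (undup_uniq _)); last first.
  by move=> x; rewrite support_scale mem_undup.
by rewrite /norm1 mulr_sumr; apply: eq_bigr => x _; rewrite coeff_scale normrM.
Qed.

Lemma eval_nil b : eval b [::] = 0.
Proof. by rewrite /eval big_nil. Qed.

Lemma eval_single b (r : R) y : eval b [:: (r, y)] = r * b y.
Proof. by rewrite /eval big_cons big_nil addr0. Qed.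

Lemma eval_cat b c d : eval b (c ++ d) = eval b c + eval b d.
Proof. by rewrite /eval big_cat. Qed.

Lemma eval_scale b r c : eval b (scale r c) = r * eval b c.
Proof. by rewrite /eval /scale big_map mulr_sumr; apply: eq_bigr => p _; rewrite mulrA. Qed.

Lemma eval_ext (b b' : cell X n -> R) c : (forall y, b y = b' y) -> eval b c = eval b' c.
Proof. by move=> E; apply: eq_bigr => p _; rewrite E. Qed.

Lemma eval_le_norm1 b (M : R) c :
  0 <= M -> (forall x, `|b x| <= M) -> `|eval b c| <= M * norm1 c.
Proof.
move=> M0 bM; rewrite (@eval_over b c (undup (support c)) (undup_uniq _)); last first.
  by move=> x; rewrite mem_undup.
rewrite /norm1 mulr_sumr; apply: le_trans (ler_norm_sum _ _ _) _.
by apply: ler_sum => x _; rewrite normrM mulrC ler_wpM2r.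
Qed.

(* The action of G permutes the basis of cells, hence preserves l^1 norms. *)
Lemma norm1_act (g : G) c d :
  (forall f, coeff d (act g f) = coeff c f) -> norm1 d = norm1 c.
Proof.
move=> E.
have actK y : act (g^-1)%g (act g y) = y by rewrite -actM mulVg act1.
have actKV y : act g (act (g^-1)%g y) = y by rewrite -actM mulgV act1.
set L := undup (support d ++ map (act g) (support c)).
have uL : uniq L by exact: undup_uniq.
have sd : {subset support d <= L} by move=> x xd; rewrite mem_undup mem_cat xd.
have uL' : uniq (map (act (g^-1)%g) L).
  by rewrite map_inj_uniq // => x y /(congr1 (act g)); rewrite !actKV.
have sc : {subset support c <= map (act (g^-1)%g) L}.
  move=> y yc; rewrite -[y]actK; apply: map_f.
  by rewrite mem_undup mem_cat map_f ?orbT.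
rewrite (norm1_over uL sd) (norm1_over uL' sc) big_map.
by apply: eq_bigr => x _; rewrite -E actKV.
Qed.

End ChainAlgebra.

Section Boundary.
Variables (G : groupType) (X : GCellComplex G) (R : realType) (n : nat).
Implicit Types (c : chain X R n.+1).

Lemma chain_bd_cat c c' : chain_bd (c ++ c') = chain_bd c ++ chain_bd c'.
Proof. by rewrite /chain_bd map_cat flatten_cat. Qed.

Lemma coeff_bd_scale r c x :
  coeff (chain_bd (scale r c)) x = r * coeff (chain_bd c) x.
Proof.
elim: c => [|p c IH]; first by rewrite /chain_bd /= coeff_nil mulr0.
rewrite /scale map_cons -cat1s chain_bd_cat coeff_cat -/(scale r c) IH.
rewrite -[p :: c]cat1s chain_bd_cat coeff_cat mulrDr; congr (_ + _).
rewrite /chain_bd /= !cats0 /coeff !big_map mulr_sumr.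
by apply: eq_bigr => q _ /=; rewrite mulrA.
Qed.

Lemma eval_cobd (b : cell X n -> R) c : eval (cobd b) c = eval b (chain_bd c).
Proof.
elim: c => [|p c IH]; first by rewrite /chain_bd /= !eval_nil.
rewrite -cat1s chain_bd_cat !eval_cat IH; congr (_ + _).
rewrite /eval big_nil addr0 big_seq1 big_map /cobd mulr_sumr.
by apply: eq_bigr => q _ /=; rewrite mulrA.
Qed.

Lemma coeff_bd_cell (e : cell X n.+1) f :
  coeff (chain_bd [:: ((1 : R), e)]) f = (\sum_(q <- bd e | q.2 == f) q.1)%:~R.
Proof.
rewrite /chain_bd /= cats0 /coeff big_map.
elim: (bd e) => [|q l IH]; first by rewrite !big_nil.
by rewrite !big_cons /= IH; case: ifP => // _; rewrite mul1r intrD.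
Qed.

Lemma norm1_bd_act (g : G) (e : cell X n.+1) :
  norm1 (chain_bd [:: ((1 : R), act g e)]) = norm1 (chain_bd [:: ((1 : R), e)]).
Proof. by apply: (norm1_act (g := g)) => f; rewrite !coeff_bd_cell bd_equiv. Qed.

End Boundary.

Definition update (T : eqType) (V : Type) (b : T -> V) (x : T) (t : V) (y : T) : V :=
  if y == x then t else b y.

Section HahnBanach.
Variables (G : groupType) (X : GCellComplex G) (R : realType) (n : nat).
Variables (a : cell X n.+1 -> R) (Lam : R).
Hypothesis Lam_ge0 : 0 <= Lam.
Hypothesis a_bounded : forall c : chain X R n.+1, `|eval a c| <= Lam * norm1 (chain_bd c).

(* b is an admissible extension on the set S of n-cells if the functional
   dc + d |-> a(c) + b(d), on boundaries plus chains supported in S, has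
   norm at most Lam; for S empty this is the hypothesis on a. *)
Definition admissible (S : cell X n -> Prop) (b : cell X n -> R) : Prop :=
  forall (c : chain X R n.+1) (d : chain X R n), supported_in S d ->
  `|eval a c + eval b d| <= Lam * norm1 (chain_bd c ++ d).

Lemma admissible_empty : admissible (fun _ => False) (fun _ => 0).
Proof.
move=> c [|p d] Hd; first by rewrite eval_nil addr0 cats0.
by case: (Hd p.2); rewrite inE eqxx.
Qed.

Section OneCell.
Variables (S : cell X n -> Prop) (b : cell X n -> R) (x : cell X n).
Hypothesis b_adm : admissible S b.

Let N c d := norm1 (chain_bd c ++ d ++ [:: ((1 : R), x)]).
Let phi c d := eval a c + eval b d.

(* Every lower constraint on the value at x lies below every upper one. *)
Lemma extension_gap c d c' d' : supported_in S d -> supported_in S d' ->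
  - Lam * N c d - phi c d <= Lam * N c' d' - phi c' d'.
Proof.
move=> Sd Sd'.
have Sdiff : supported_in S (d' ++ scale (-1) d).
  by move=> y; rewrite /support map_cat mem_cat -!/(support _) support_scale => /orP[/Sd'|/Sd].
have := b_adm (c' ++ scale (-1) c) Sdiff.
rewrite !eval_cat !eval_scale.
set u := chain_bd c' ++ d' ++ [:: ((1 : R), x)].
set v := chain_bd c ++ d ++ [:: ((1 : R), x)].
have -> : norm1 (chain_bd (c' ++ scale (-1) c) ++ d' ++ scale (-1) d) =
          norm1 (u ++ scale (-1) v).
  apply: norm1_eq_coeff => y.
  by rewrite chain_bd_cat !coeff_cat !coeff_scale !coeff_cat coeff_bd_scale; ring.
have := norm1_cat u (scale (-1) v); rewrite norm1_scale normrN normr1 mul1r => Huv.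
have := ler_wpM2l Lam_ge0 Huv; rewrite mulrDr.
have := ler_norm (eval a c' + - 1 * eval a c + (eval b d' + - 1 * eval b d)).
rewrite /N /phi -/u -/v; lra.
Qed.

(* A value at x compatible with all constraints: the supremum of the lower
   bounds, which lies below every upper bound by extension_gap. *)
Lemma extension_value : exists t : R,
  forall c d, supported_in S d -> `|phi c d + t| <= Lam * N c d.
Proof.
pose E := [set v : R | exists c d, supported_in S d /\ v = - Lam * N c d - phi c d]%classic.
have supE : has_sup E.
  split; first by exists (- Lam * N [::] [::] - phi [::] [::]); exists [::], [::].
  exists (Lam * N [::] [::] - phi [::] [::]) => v [c [d [Sd ->]]].
  exact: extension_gap.
exists (sup E) => c d Sd.
have lo : - Lam * N c d - phi c d <= sup E by apply: ub_le_sup; [case: supE | exists c, d].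
have hi : sup E <= Lam * N c d - phi c d.
  apply: ge_sup; first by case: supE.
  by move=> v [c' [d' [Sd' ->]]]; exact: extension_gap.
rewrite ler_norml; apply/andP; split; lra.
Qed.

Lemma coeff_split (d : chain X R n) y :
  coeff d y = coeff (filter (fun p => p.2 != x) d ++ [:: (coeff d x, x)]) y.
Proof.
rewrite coeff_cat coeff_single /coeff big_filter_cond.
case: (eqVneq x y) => [<-|nxy].
  by rewrite big_pred0 ?add0r // => p; case: (eqVneq p.2 x).
rewrite addr0; apply: eq_bigl => p.
by case: (eqVneq p.2 y) => [->|]; rewrite ?andbF // eq_sym nxy.
Qed.

(* A value at x satisfying the constraints of extension_value yields an
   admissible extension to S + x: the case of a nonzero x-coordinate s
   reduces to s = 1 by homogeneity. *)
Lemma admissible_update (t : R) :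
  (forall c d, supported_in S d -> `|phi c d + t| <= Lam * N c d) ->
  admissible (fun y => S y \/ y = x) (update b x t).
Proof.
move=> tH c d Sxd.
set dS := filter (fun p => p.2 != x) d; set s := coeff d x.
have SdS : supported_in S dS.
  move=> y /mapP[p]; rewrite mem_filter => /andP[px pd] ->.
  by case: (Sxd p.2 (map_f _ pd)) => // ex; rewrite ex eqxx in px.
have evalE : eval (update b x t) d = eval b dS + s * t.
  rewrite (eval_eq_coeff _ (coeff_split d)) eval_cat eval_single /update eqxx.
  congr (_ + _); rewrite /dS /eval !big_filter; apply: eq_bigr => p px.
  by rewrite /update (negbTE px).
have normE : norm1 (chain_bd c ++ d) = norm1 (chain_bd c ++ dS ++ [:: (s, x)]).
  by apply: norm1_eq_coeff => y; rewrite !coeff_cat (coeff_split d) coeff_cat addrA.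
rewrite evalE normE; case: (eqVneq s 0) => [->|s0].
  rewrite mul0r addr0 (@norm1_eq_coeff _ _ _ _ _ (chain_bd c ++ dS)); first exact: b_adm.
  by move=> y; rewrite !coeff_cat coeff_single; case: ifP; rewrite addr0.
have SdS' : supported_in S (scale s^-1 dS) by move=> y; rewrite support_scale; exact: SdS.
have := tH (scale s^-1 c) (scale s^-1 dS) SdS'.
rewrite /phi /N !eval_scale.
have -> : norm1 (chain_bd (scale s^-1 c) ++ scale s^-1 dS ++ [:: ((1 : R), x)]) =
          norm1 (scale s^-1 (chain_bd c ++ dS ++ [:: (s, x)])).
  apply: norm1_eq_coeff => y.
  rewrite !coeff_cat !coeff_scale !coeff_cat coeff_bd_scale !coeff_single.
  by case: ifP => _; field.
rewrite norm1_scale => /(ler_wpM2l (normr_ge0 s)).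
have ns : `|s| != 0 by rewrite normr_eq0.
have -> : `|s| * `|s^-1 * eval a c + s^-1 * eval b dS + t| =
          `|eval a c + (eval b dS + s * t)|.
  by rewrite -normrM; congr `|_|; field.
set M := norm1 _; have -> // : `|s| * (Lam * (`|s^-1| * M)) = Lam * M.
by rewrite normrV ?unitfE //; field.
Qed.

Lemma admissible_extend : exists t, admissible (fun y => S y \/ y = x) (update b x t).
Proof. by have [t tH] := extension_value; exists t; exact: admissible_update. Qed.

End OneCell.

Definition partial_ext :=
  {p : (cell X n -> Prop) * (cell X n -> R) | admissible p.1 p.2}.

Definition extends (u v : partial_ext) : bool :=
  `[< forall y, (sval u).1 y -> (sval v).1 y /\ (sval u).2 y = (sval v).2 y >].

Section ChainUnion.
Variable A : set partial_ext.
Hypothesis A_total : total_on A extends.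

Definition union_dom y := exists u, A u /\ (sval u).1 y.
Definition union_val y : R :=
  match pselect (union_dom y) with
  | left h => (sval (sval (cid h))).2 y
  | right _ => 0
  end.

Lemma union_valE u y : A u -> (sval u).1 y -> union_val y = (sval u).2 y.
Proof.
move=> Au uy; rewrite /union_val; case: pselect => [h|nh]; last by case: nh; exists u.
have [Aw wy] := svalP (cid h).
by have [/asboolP H|/asboolP H] := A_total Au Aw; [case: (H y uy) | case: (H y wy)].
Qed.

Lemma union_support (d : chain X R n) : supported_in union_dom d ->
  d = [::] \/ exists u, A u /\ supported_in (sval u).1 d.
Proof.
elim: d => [|p d IH] Hd; first by left.
right; have [u0 [Au0 u0p]] := Hd p.2 (mem_head _ _).
have [->|[u1 [Au1 u1d]]] : d = [::] \/ exists u, A u /\ supported_in (sval u).1 d.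
- by apply: IH => y yd; apply: Hd; rewrite inE yd orbT.
- by exists u0; split => // y; rewrite inE => /eqP ->.
have [/asboolP R01|/asboolP R10] := A_total Au0 Au1.
  exists u1; split => // y; rewrite inE => /orP[/eqP ->|/u1d //].
  by case: (R01 _ u0p).
exists u0; split => // y; rewrite inE => /orP[/eqP -> //|/u1d h].
by case: (R10 _ h).
Qed.

Lemma admissible_union : admissible union_dom union_val.
Proof.
move=> c d Hd; have [->|[u [Au ud]]] := union_support Hd.
  by rewrite eval_nil addr0 cats0.
have -> : eval union_val d = eval (sval u).2 d.
  apply: eq_big_seq => p pd; congr (_ * _).
  by apply: union_valE => //; apply: ud; apply: map_f.
exact: (svalP u).
Qed.

End ChainUnion.

(* Zorn's lemma: a maximal admissible extension is defined everywhere. *)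
Lemma admissible_total : exists b, admissible (fun _ => True) b.
Proof.
have [m m_max] : exists m : partial_ext, premaximal extends m.
  apply: (ZL_preorder (exist _ (_, _) admissible_empty)).
  - by move=> u; apply/asboolP.
  - move=> u v w /asboolP uv /asboolP vw; apply/asboolP => y uy.
    by have [vy ->] := uv y uy; have [wy ->] := vw y vy.
  - move=> A A_total; exists (exist _ (_, _) (admissible_union A_total)).
    move=> u Au; apply/asboolP => y uy; split; first by exists u.
    by rewrite /= (union_valE A_total Au uy).
have m_all y : (sval m).1 y.
  case: (pselect ((sval m).1 y)) => // my.
  have [t adm] := admissible_extend y (svalP m).
  pose u : partial_ext := exist _ (_, _) adm.
  have m_u : extends m u.
    apply/asboolP => z mz; split; first by left.
    by rewrite /= /update; case: eqP => // zy; rewrite zy in mz.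
  by have /asboolP /(_ y (or_intror erefl)) [] := m_max u m_u.
by exists (sval m).2 => c d _; apply: (svalP m) => y _.
Qed.

Lemma bounded_primitive : exists b : cell X n -> R,
  (forall y, `|b y| <= Lam) /\ forall e, a e = cobd b e.
Proof.
have [b b_adm] := admissible_total.
have adm c d := b_adm c d (fun _ _ => I).
exists b; split.
  move=> y; have := adm [::] [:: ((1 : R), y)].
  rewrite eval_nil add0r eval_single mul1r /chain_bd /=.
  by rewrite /norm1 /= big_cons big_nil coeff_single eqxx normr1 addr0 mulr1.
move=> e; have := adm [:: ((1 : R), e)] (scale (-1) (chain_bd [:: ((1 : R), e)])).
have -> : norm1 (chain_bd [:: ((1 : R), e)] ++ scale (-1) (chain_bd [:: ((1 : R), e)])) = 0.
  rewrite -(norm1_nil X R n); apply: norm1_eq_coeff => y.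
  by rewrite coeff_cat coeff_scale coeff_nil mulN1r subrr.
rewrite mulr0 normr_le0 eval_scale -eval_cobd !eval_single !mul1r mulN1r subr_eq0.
by move/eqP.
Qed.

End HahnBanach.

Section Bounds.
Variables (G : groupType) (X : GCellComplex G) (R : realType).

Lemma cobd_bounded_on_orbits n (b : cell X n -> R) (M : R) :
  0 <= M -> (forall y, `|b y| <= M) -> bounded_on_orbits (cobd b).
Proof.
move=> M0 bM e; exists (M * norm1 (chain_bd [:: ((1 : R), e)])) => g.
rewrite -(norm1_bd_act R g) -[cobd b _]mul1r -eval_single eval_cobd.
exact: eval_le_norm1.
Qed.

Lemma cobd_ell1_bd_bounded n (b : cell X n -> R) (M : R) (a : cell X n.+1 -> R) :
  0 <= M -> (forall y, `|b y| <= M) -> (forall e, a e = cobd b e) ->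
  ell1_bd_bounded a.
Proof.
move=> M0 bM ab; exists M; split => // c.
by rewrite /= (eval_ext _ ab) eval_cobd; exact: eval_le_norm1.
Qed.

Lemma bounded_of_finite_orbits n (b : cell X n -> R) (s : seq (cell X n)) :
  (forall e, exists g : G, exists2 e0, e0 \in s & e = act g e0) ->
  bounded_on_orbits b -> exists M, 0 <= M /\ forall y, `|b y| <= M.
Proof.
move=> orbits bb.
suff [M [M0 HM]] : exists M, 0 <= M /\ forall e0, e0 \in s -> forall g, `|b (act g e0)| <= M.
  by exists M; split => // y; have [g [e0 e0s ->]] := orbits y; exact: HM.
elim: s {orbits} => [|e0 s [M [M0 HM]]]; first by exists 0.
have [M1 H1] := bb e0.
exists (Num.max M (Num.max M1 0)); split; first by rewrite le_max M0.
move=> e; rewrite inE => /orP[/eqP -> g|es g].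
  by apply: le_trans (H1 g) _; rewrite !le_max lexx !orbT.
by apply: le_trans (HM e es g) _; rewrite le_max lexx.
Qed.

(* In degree 0 the boundary vanishes, so the l^1 bound forces a = 0. *)
Lemma ell1_bd_bounded_deg0 (a : cell X 0 -> R) : ell1_bd_bounded a -> forall e, a e = 0.
Proof.
move=> [L [_ HL]] e; have := HL [:: ((1 : R), e)].
by rewrite /= mulr0 eval_single mul1r normr_le0 => /eqP.
Qed.

End Bounds.

Theorem mainTheorem5 (G : groupType) (X : GCellComplex G) (R : realType)
  (k : nat) (a : cell X k -> R) :
  cocycle a ->
  (ell1_bd_bounded a -> bounded_on_orbits a /\ linf_cohom_zero a) /\
  (finite_skeleton_below X k -> bounded_on_orbits a -> linf_cohom_zero a ->
     ell1_bd_bounded a).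
Proof.
move=> _; case: k a => [|n] a; split.
- move=> /ell1_bd_bounded_deg0 a0; split=> // e.
  by exists 0 => g; rewrite a0 normr0.
- move=> _ _ a0; exists 0; split => // c.
  by rewrite /eval big1 ?normr0 ?mul0r // => p _; rewrite a0 mulr0.
- move=> [L [L0 HL]]; have [b [bL ab]] := bounded_primitive L0 HL.
  split; last by exists b; split => // e; exists L.
  by move=> e; have [M HM] := cobd_bounded_on_orbits L0 bL e; exists M => g; rewrite ab.
- move=> finite _ [b [bb ab]]; have [s orbits] := finite n (ltnSn n).
  have [M [M0 bM]] := bounded_of_finite_orbits orbits bb.
  exact: cobd_ell1_bd_bounded M0 bM ab.
Qed.
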